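(* Let $q\ge2$, $k\in[1:q]$, and let $\mathbf{u}$ be a probability distribution on $[1:q]$ with $|\mathrm{supp}(\mathbf{u})|=k$. Then for all sufficiently large $n$, $$M_{n,\mathbf{u}}(\mathbf{t})\le\frac{2}{n^{(k-1)/2}\sqrt{\prod_{i\in\mathrm{supp}(\mathbf{u})}u_i}}\qquad\forall\mathbf{t}\in\mathcal{N}_{q,n}.$$
   Context: $\mathcal{N}_{q,n}=\{\mathbf{t}\in\mathbb{Z}_{\ge0}^q:\sum_it_i=n\}$; $M_{n,\mathbf{u}}(\mathbf{t})=\frac{n!}{t_1!\cdots t_q!}\prod_iu_i^{t_i}$ (with $0^0=1$); $\mathrm{supp}(\mathbf{u})=\{i:u_i>0\}$. *)

From HB Require Import structures.
From mathcomp Require Import all_boot all_order all_algebra.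
From mathcomp Require Import reals exp.
Set Implicit Arguments. Unset Strict Implicit. Unset Printing Implicit Defensive.
Import Order.TTheory GRing.Theory Num.Theory.
Local Open Scope ring_scope.

Definition in_Nqn (q n : nat) (t : 'I_q -> nat) : Prop := (\sum_(i < q) t i)%N = n.

Definition is_prob_dist (R : realType) (q : nat) (u : 'I_q -> R) : Prop :=
  (forall i, 0 <= u i) /\ \sum_(i < q) u i = 1.

Definition supp (R : realType) (q : nat) (u : 'I_q -> R) : {set 'I_q} :=
  [set i | 0 < u i].

(* M_{n,u}(t) = n!/(t_1!...t_q!) * prod u_i^{t_i}  (with 0^0 = 1) *)
Definition multinom (R : realType) (q n : nat) (u : 'I_q -> R) (t : 'I_q -> nat) : R :=
  (n`!)%:R / (\prod_(i < q) ((t i)`!)%:R) * \prod_(i < q) u i ^+ t i.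

From HB Require Import structures.
From mathcomp Require Import all_boot all_order all_algebra.
From mathcomp Require Import functions reals normedtype sequences derive exp.
From mathcomp Require Import ring lra zify.
Import Order.TTheory GRing.Theory Num.Theory.
Import numFieldNormedType.Exports.
Local Open Scope ring_scope.

(* Let rho(m) = (m!)^2 e^(2m) / m^(2m+1) (it tends to 2 pi).  Two elementary
   estimates of ln((m+1)/m) show that rho is nonincreasing from rho(1) = e^2 and
   stays above e^(1 + 1/m) >= 2.  With c = rho(n) we then have
   (n!)^2 = c n^(2n+1) e^(-2n) and (t_i!)^2 >= c t_i^(2 t_i + 1) e^(-2 t_i) for
   0 < t_i <= n, the same constant on both sides, whence
     M_{n,u}(t)^2 <= c n * prod_{t_i > 0} (c t_i)^-1 * exp(-2 S),
   S = sum_i (sqrt(n u_i) - sqrt(t_i))^2, the last factor coming from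
   (x/t)^t <= exp(2 sqrt(x t) - 2 t).  If t_i >= n u_i / 2 on the support, the
   product is at most (2 / (c n))^k / prod u_i, and c >= 2 gives the bound.
   Otherwise S >= n min_i u_i / 16, and M^2 decays exponentially in n. *)

Section MultinomialBound.
Variable R : realType.
Implicit Types a x : R.

Lemma ler_of_is_derive_ge0 (f df : R -> R) a :
  (forall x, a <= x -> is_derive x 1 f (df x)) ->
  (forall x, a < x -> 0 <= df x) -> forall x, a <= x -> f a <= f x.
Proof.
move=> f'df df_ge0 x a_le_x.
have f_der y : a <= y -> derivable f y 1 by move/f'df => ?; exact: ex_derive.
apply: (ger0_derive1_ndecry _ _ _ (lexx a) a_le_x).
- by move=> y; rewrite in_itv andbT => /ltW/f_der.
- move=> y; rewrite in_itv andbT => a_lt_y; have := f'df y (ltW a_lt_y) => ?.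
  by rewrite derive1E derive_val df_ge0.
- by apply: derivable_within_continuous => y; rewrite in_itv andbT => /f_der.
Qed.

Lemma ln_ge_1subV x : 0 < x -> 1 - x^-1 <= ln x.
Proof.
move=> x_gt0; have xV_gt0 : 0 < x^-1 by rewrite invr_gt0.
have := le_ln1Dx (x := x^-1 - 1) ltac:(lra).
by rewrite addrC subrK lnV ?posrE //; lra.
Qed.

Lemma ln_le_subr1 x : 0 < x -> ln x <= x - 1.
Proof. by move=> x_gt0; have := le_ln1Dx (x := x - 1) ltac:(lra); rewrite addrC subrK. Qed.

Lemma mul1Dr_ln_ge x : 1 <= x -> 2 * (x - 1) <= (1 + x) * ln x.
Proof.
move=> x_ge1; rewrite -subr_ge0.
pose f (y : R) := (1 + y) * ln y - 2 * (y - 1).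
have f'y (y : R) : 1 <= y -> is_derive y 1 f (ln y + (1 + y) / y - 2).
  move=> y_ge1; have := is_derive1_ln (lt_le_trans ltr01 y_ge1) => ?.
  have -> : f = (fun y => 1 + y) * @ln R - (fun y => 2 * (y - 1)) :> (R -> R) by [].
  by apply: is_derive_eq; rewrite /= /GRing.scale /=; lra.
have := @ler_of_is_derive_ge0 f _ 1 f'y _ x x_ge1.
rewrite /f ln1 mulr0 subrr mulr0 subr0; apply=> y y_gt1.
have y_gt0 : 0 < y by lra.
have := ln_ge_1subV y y_gt0.
by rewrite mulrDl mul1r divff ?gt_eqF //; lra.
Qed.

Lemma mul1Dr_ln_le x : 1 <= x -> (1 + x) * ln x <= 2 * (x - 1) + (x - 1) ^+ 3 / 2.
Proof.
move=> x_ge1; rewrite -subr_ge0.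
pose f (y : R) := 2 * (y - 1) + (y - 1) ^+ 3 / 2 - (1 + y) * ln y.
have f'y (y : R) : 1 <= y ->
    is_derive y 1 f (2 + 3 * (y - 1) ^+ 2 / 2 - (ln y + (1 + y) / y)).
  move=> y_ge1; have := is_derive1_ln (lt_le_trans ltr01 y_ge1) => ?.
  have -> : f = (fun y => 2 * (y - 1)) + (fun y => y - 1) ^+ 3 * cst 2^-1
      - (fun y => 1 + y) * @ln R :> (R -> R) by [].
  by apply: is_derive_eq; rewrite /= /GRing.scale /= mulr0 add0r cstE; lra.
have := @ler_of_is_derive_ge0 f _ 1 f'y _ x x_ge1.
rewrite /f ln1 !mulr0 subrr mulr0 expr0n /= mul0r !addr0 subr0; apply=> y y_gt1.
have y_gt0 : 0 < y by lra.
have := ln_le_subr1 y y_gt0.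
have -> : (1 + y) / y = y^-1 + 1 by rewrite mulrDl mul1r divff ?gt_eqF.
have yV_le1 : y^-1 <= 1 by rewrite invr_le1 ?unitfE ?gt_eqF //; lra.
have : (y - 1) ^+ 2 * y^-1 <= (y - 1) ^+ 2 by rewrite ler_piMr ?sqr_ge0.
have : (y - 1) ^+ 2 * y^-1 = y - 2 + y^-1 by field; rewrite gt_eqF.
by have := sqr_ge0 (y - 1); lra.
Qed.

Implicit Types m n : nat.

Definition stirling_ratio m : R :=
  m`!%:R ^+ 2 * expR (2 * m%:R) / m%:R ^+ (2 * m + 1).

(* The exponent is (2 m + 1) ln((m + 1) / m), written so as to match [mul1Dr_ln_ge]
   and [mul1Dr_ln_le] at x = (m + 1) / m. *)
Lemma succ_div_powE m : (0 < m)%N ->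
  (m.+1%:R / m%:R) ^+ (2 * m + 1) =
    expR (m%:R * ((1 + m.+1%:R / m%:R) * ln (m.+1%:R / m%:R))) :> R.
Proof.
move=> m_gt0; have m_gt0R : 0 < m%:R :> R by rewrite ltr0n.
rewrite mulrA.
have -> : m%:R * (1 + m.+1%:R / m%:R) = (2 * m + 1)%N%:R :> R.
  by rewrite natrD natrM -natr1; field; rewrite gt_eqF.
by rewrite expRM_natl lnK // posrE divr_gt0 // ltr0n.
Qed.

Lemma expR2_le_succ_div_pow m : (0 < m)%N ->
  expR 2 <= (m.+1%:R / m%:R) ^+ (2 * m + 1) :> R.
Proof.
move=> m_gt0; have m_gt0R : 0 < m%:R :> R by rewrite ltr0n.
have x_ge1 : 1 <= m.+1%:R / m%:R :> R by rewrite ler_pdivlMr // mul1r ler_nat.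
rewrite succ_div_powE // ler_expR.
have := ler_wpM2l (ltW m_gt0R) (mul1Dr_ln_ge _ x_ge1).
have -> // : m%:R * (2 * (m.+1%:R / m%:R - 1)) = 2 :> R.
by rewrite -natr1; field; rewrite gt_eqF.
Qed.

Lemma succ_div_pow_le_expR m : (0 < m)%N ->
  (m.+1%:R / m%:R) ^+ (2 * m + 1) <= expR (2 + (m%:R * m.+1%:R)^-1) :> R.
Proof.
move=> m_gt0; have m_ge1 : 1 <= m%:R :> R by rewrite ler1n.
have x_ge1 : 1 <= m.+1%:R / m%:R :> R by rewrite ler_pdivlMr ?mul1r ?ler_nat //; lra.
rewrite succ_div_powE // ler_expR.
apply: le_trans (ler_wpM2l (ler0n _ m) (mul1Dr_ln_le _ x_ge1)) _.
have -> : m%:R * (2 * (m.+1%:R / m%:R - 1) + (m.+1%:R / m%:R - 1) ^+ 3 / 2) =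
    2 + (2 * m%:R * m%:R)^-1 :> R.
  by rewrite -natr1; field; lra.
by rewrite lerD2l lef_pV2 ?posrE -?natr1; nra.
Qed.

Lemma stirling_ratioS m : (0 < m)%N ->
  stirling_ratio m.+1 = stirling_ratio m * expR 2 / (m.+1%:R / m%:R) ^+ (2 * m + 1).
Proof.
move=> m_gt0; have m_gt0R : 0 < m%:R :> R by rewrite ltr0n.
rewrite /stirling_ratio factS natrM expr_div_n.
have -> : (2 * m.+1 + 1 = (2 * m + 1) + 2)%N by lia.
rewrite exprD -natr1 mulrDr mulr1 expRD.
by field; rewrite !expf_neq0 ?gt_eqF ?expR_gt0 //; lra.
Qed.

Lemma stirling_ratio_ge0 m : 0 <= stirling_ratio m.
Proof. by rewrite divr_ge0 ?mulr_ge0 ?exprn_ge0 ?expR_ge0. Qed.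

Lemma stirling_ratio1 : stirling_ratio 1 = expR 2.
Proof. by rewrite /stirling_ratio mulr1 !expr1n mul1r divr1. Qed.

Lemma stirling_ratio_nonincr m n : (0 < m)%N -> (m <= n)%N ->
  stirling_ratio n <= stirling_ratio m.
Proof.
move=> m_gt0; elim: n => [|n IHn]; first by rewrite leqn0 => /eqP ->.
rewrite leq_eqVlt => /orP[/eqP <- // | m_le_n].
have n_gt0 : (0 < n)%N by lia.
apply: le_trans (IHn m_le_n); rewrite stirling_ratioS // -mulrA.
rewrite ler_piMr ?stirling_ratio_ge0 // ler_pdivrMr ?mul1r ?expR2_le_succ_div_pow //.
by rewrite exprn_gt0 // divr_gt0 // ltr0n.
Qed.

Lemma stirling_ratio_le_expR2 m : (0 < m)%N -> stirling_ratio m <= expR 2.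
Proof. by move=> m_gt0; rewrite -stirling_ratio1 stirling_ratio_nonincr. Qed.

(* The upper estimate telescopes: 1/(m (m + 1)) = 1/m - 1/(m + 1). *)
Lemma stirling_ratio_ge m : (0 < m)%N -> expR (1 + m%:R^-1) <= stirling_ratio m.
Proof.
elim: m => [//|m IHm] _; case: (posnP m) => [-> | m_gt0].
  by rewrite stirling_ratio1 invr1.
have m_gt0R : 0 < m%:R :> R by rewrite ltr0n.
have pow_gt0 : 0 < (m.+1%:R / m%:R) ^+ (2 * m + 1) :> R.
  by rewrite exprn_gt0 // divr_gt0 // ltr0n.
have ratio_ge : expR 2 / expR (2 + (m%:R * m.+1%:R)^-1) <=
    expR 2 / (m.+1%:R / m%:R) ^+ (2 * m + 1) :> R.
  rewrite ler_wpM2l ?expR_ge0 // lef_pV2 ?posrE ?expR_gt0 //.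
  exact: succ_div_pow_le_expR.
rewrite stirling_ratioS // -mulrA.
apply: le_trans (ler_pM (expR_ge0 _) _ (IHm m_gt0) ratio_ge); last first.
  by rewrite divr_ge0 ?expR_ge0.
rewrite -expRN -!expRD ler_expR [X in _ <= X](_ : _ = 1 + m.+1%:R^-1) //.
by rewrite -natr1; field; lra.
Qed.

Lemma stirling_ratio_ge2 m : (0 < m)%N -> 2 <= stirling_ratio m.
Proof.
move=> m_gt0; apply: le_trans (stirling_ratio_ge _ m_gt0).
by apply: le_trans (expR_ge1Dx _); rewrite addrA lerDl invr_ge0.
Qed.

Lemma stirling_ratio_gt0 m : (0 < m)%N -> 0 < stirling_ratio m.
Proof. by move/stirling_ratio_ge2; apply: lt_le_trans. Qed.

Lemma sqr_factE n : (0 < n)%N ->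
  n`!%:R ^+ 2 = stirling_ratio n * n%:R ^+ (2 * n + 1) / expR (2 * n%:R) :> R.
Proof.
move=> n_gt0; rewrite /stirling_ratio; field.
by rewrite gt_eqF ?expR_gt0 // expf_neq0 // pnatr_eq0 -lt0n.
Qed.

Lemma sqr_fact_ge m n : (0 < m)%N -> (m <= n)%N ->
  stirling_ratio n * m%:R ^+ (2 * m + 1) / expR (2 * m%:R) <= m`!%:R ^+ 2 :> R.
Proof.
move=> m_gt0 m_le_n; rewrite sqr_factE // ler_wpM2r ?invr_ge0 ?expR_ge0 //.
by rewrite ler_wpM2r ?exprn_ge0 ?stirling_ratio_nonincr.
Qed.

Lemma sqr_pow_div_fact_le m n (v : R) : (m <= n)%N ->
  (v ^+ m / m`!%:R) ^+ 2 <=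
    (if (0 < m)%N then (stirling_ratio n * m%:R)^-1 else 1) *
    (expR m%:R * (v / m%:R) ^+ m) ^+ 2.
Proof.
case: (posnP m) => [-> _ | m_gt0 m_le_n].
  by rewrite !expr0 fact0 divr1 expR0 !mul1r expr1n.
have n_gt0 : (0 < n)%N by lia.
have c_gt0 := stirling_ratio_gt0 _ n_gt0.
have m_gt0R : 0 < m%:R :> R by rewrite ltr0n.
pose low := stirling_ratio n * m%:R ^+ (2 * m + 1) / expR (2 * m%:R).
have low_gt0 : 0 < low by rewrite divr_gt0 ?expR_gt0 // mulr_gt0 // exprn_gt0.
have -> : (stirling_ratio n * m%:R)^-1 * (expR m%:R * (v / m%:R) ^+ m) ^+ 2 =
    (v ^+ m) ^+ 2 / low.
  rewrite /low expRM_natl (mulnC 2 m) exprD exprM expr1 !expr_div_n !exprMn.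
  by field; rewrite !gt_eqF ?expR_gt0 ?exprn_gt0.
rewrite expr_div_n ler_wpM2l ?sqr_ge0 // lef_pV2 ?posrE ?sqr_fact_ge //.
by rewrite exprn_gt0 // ltr0n fact_gt0.
Qed.

(* With y = sqrt (x / m) this is y ^ (2 m) <= exp (2 m (y - 1)). *)
Lemma pow_div_le_expR x m : 0 <= x ->
  (x / m%:R) ^+ m <= expR (x - m%:R - (Num.sqrt x - Num.sqrt m%:R) ^+ 2).
Proof.
move=> x_ge0; case: (posnP m) => [-> | m_gt0].
  by rewrite expr0 mulr0n sqrtr0 !subr0 sqr_sqrtr // subrr expR0.
have sm_gt0 : 0 < Num.sqrt m%:R :> R by rewrite sqrtr_gt0 ltr0n.
set y := Num.sqrt x / Num.sqrt m%:R.
have y_ge0 : 0 <= y by rewrite divr_ge0 ?sqrtr_ge0.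
have -> : x / m%:R = y ^+ 2 by rewrite expr_div_n !sqr_sqrtr ?ler0n.
have -> : x - m%:R - (Num.sqrt x - Num.sqrt m%:R) ^+ 2 = (m * 2)%N%:R * (y - 1).
  rewrite natrM /y; set sx := Num.sqrt x; set sm := Num.sqrt m%:R.
  have -> : x = sx ^+ 2 by rewrite sqr_sqrtr.
  have -> : m%:R = sm ^+ 2 :> R by rewrite sqr_sqrtr ?ler0n.
  by field; rewrite gt_eqF.
rewrite -exprM mulnC expRM_natl lerXn2r ?nnegrE ?expR_ge0 //.
by have := expR_ge1Dx (y - 1); rewrite addrC subrK.
Qed.

Lemma eventually_pow_mul_expRN_le a b k : 0 < a -> 0 < b ->
  exists N : nat, forall n, (N <= n)%N -> n%:R ^+ k * expR (- (n%:R * a)) <= b.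
Proof.
move=> a_gt0 b_gt0; set N0 := k.+1`!%:R / (a ^+ k.+1 * b).
have N0_ge0 : 0 <= N0.
  by rewrite divr_ge0 // (mulr_ge0 (exprn_ge0 _ (ltW a_gt0)) (ltW b_gt0)).
exists (Num.trunc N0).+1 => n n_large.
have n_gt : N0 < n%:R by apply: lt_le_trans (truncnS_gt N0) _; rewrite ler_nat.
have n_gt0 : 0 < n%:R :> R := le_lt_trans N0_ge0 n_gt.
have na_ge0 : 0 <= n%:R * a by rewrite mulr_ge0 ?ltW.
have exp_ge : (n%:R * a) ^+ k.+1 / k.+1`!%:R <= expR (n%:R * a).
  by have := expR_ge1Dxn k na_ge0; lra.
rewrite expRN ler_pdivrMr ?expR_gt0 //.
apply: le_trans (ler_wpM2l (ltW b_gt0) exp_ge).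
rewrite mulrA ler_pdivlMr ?ltr0n ?fact_gt0 // exprMn exprS.
have -> : b * (n%:R * n%:R ^+ k * a ^+ k.+1) =
    n%:R ^+ k * (n%:R * (a ^+ k.+1 * b)) by ring.
rewrite ler_pM2l ?exprn_gt0 // ltW // -ltr_pdivrMr //.
by rewrite mulr_gt0 ?exprn_gt0.
Qed.

Lemma le_two_div_of_sqr x (p : R) n k :
  (0 < n)%N -> (0 < k)%N -> 0 < p -> 0 <= x ->
  x ^+ 2 * n%:R ^+ k.-1 * p <= 4 ->
  x <= 2 / (n%:R `^ ((k%:R - 1) / 2) * Num.sqrt p).
Proof.
move=> n_gt0 k_gt0 p_gt0 x_ge0 sqr_le4.
set y := _ * Num.sqrt p.
have y_gt0 : 0 < y by rewrite mulr_gt0 ?powR_gt0 ?ltr0n ?sqrtr_gt0.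
have y2 : y ^+ 2 = n%:R ^+ k.-1 * p.
  rewrite exprMn sqr_sqrtr ?ltW //; congr (_ * _).
  rewrite -[LHS](powR_mulrn _ (powR_ge0 _ _)) -powRrM -powR_mulrn ?ler0n //.
  by congr (_ `^ _); rewrite -[in LHS](prednK k_gt0) -natr1 addrK; field.
rewrite ler_pdivlMr //.
have : (x * y) ^+ 2 <= 4 by rewrite exprMn y2 mulrA.
have := mulr_ge0 x_ge0 (ltW y_gt0).
nra.
Qed.

Lemma multinomE q n (u : 'I_q -> R) t :
  multinom n u t = n`!%:R * \prod_(i < q) (u i ^+ t i / (t i)`!%:R).
Proof. by rewrite /multinom prodf_div mulrA mulrAC. Qed.

Section Distribution.
Variables (q : nat) (u : 'I_q -> R).
Hypotheses (u_ge0 : forall i, 0 <= u i) (sum_u : \sum_(i < q) u i = 1).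

Local Notation P := (\prod_(i in supp u) u i).

Lemma prob_le1 i : u i <= 1.
Proof. by rewrite -sum_u (bigD1 i) //= lerDl sumr_ge0. Qed.

Lemma prod_supp_gt0 : 0 < P.
Proof. by apply: prodr_gt0 => i; rewrite inE. Qed.

Lemma prod_supp_le j : j \in supp u -> P <= u j.
Proof.
move=> j_supp; rewrite (bigD1 j) //= ler_piMr //.
by apply: prodr_ile1 => i _; rewrite u_ge0 prob_le1.
Qed.

Lemma multinom_ge0 n t : 0 <= multinom n u t.
Proof.
rewrite /multinom !mulr_ge0 ?invr_ge0 ?prodr_ge0 // => i _.
by rewrite exprn_ge0.
Qed.

Section FixedCounts.
Variables (n : nat) (t : 'I_q -> nat).
Hypotheses (n_gt0 : (0 < n)%N) (sum_t : (\sum_(i < q) t i)%N = n).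

Local Notation c := (stirling_ratio n).
Local Notation weight := (\prod_(i < q | (0 < t i)%N) (c * (t i)%:R)^-1).
Local Notation S := (\sum_(i < q) (Num.sqrt (n%:R * u i) - Num.sqrt (t i)%:R) ^+ 2).

Lemma count_le_n i : (t i <= n)%N.
Proof. by rewrite -sum_t (bigD1 i) //= leq_addr. Qed.

Lemma weight_ge0 : 0 <= weight.
Proof.
apply: prodr_ge0 => i _.
by rewrite invr_ge0 mulr_ge0 ?ler0n ?ltW ?stirling_ratio_gt0.
Qed.

Lemma prod_pow_div_le_expR :
  \prod_(i < q) (n%:R * u i / (t i)%:R) ^+ t i <= expR (- S).
Proof.
apply: le_trans (ler_prod _ (E2 := fun i => expR (n%:R * u i - (t i)%:R -
  (Num.sqrt (n%:R * u i) - Num.sqrt (t i)%:R) ^+ 2)) _) _.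
  move=> i _; rewrite pow_div_le_expR ?mulr_ge0 ?andbT //.
  by rewrite exprn_ge0 ?divr_ge0 ?mulr_ge0.
rewrite -expR_sum ler_expR !sumrB -mulr_sumr sum_u -natr_sum sum_t.
by rewrite mulr1 subrr sub0r.
Qed.

Lemma prod_expR_mul_powE :
  \prod_(i < q) (expR (t i)%:R * (u i / (t i)%:R) ^+ t i) =
    expR n%:R / n%:R ^+ n * \prod_(i < q) (n%:R * u i / (t i)%:R) ^+ t i.
Proof.
have -> : \prod_(i < q) (n%:R * u i / (t i)%:R) ^+ t i =
    n%:R ^+ n * \prod_(i < q) (u i / (t i)%:R) ^+ t i.
  have -> : n%:R ^+ n = \prod_(i < q) n%:R ^+ t i :> R by rewrite prodrXr sum_t.
  by rewrite -big_split; apply: eq_bigr => i _; rewrite -mulrA exprMn.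
rewrite big_split /= -expR_sum -natr_sum sum_t mulrA divfK //.
by rewrite expf_neq0 // pnatr_eq0 -lt0n.
Qed.

Lemma multinom_sqr_le : multinom n u t ^+ 2 <= c * n%:R * weight * expR (- S) ^+ 2.
Proof.
have c_ge0 : 0 <= c := ltW (stirling_ratio_gt0 _ n_gt0).
rewrite multinomE exprMn -prodrXl.
apply: le_trans (ler_wpM2l (sqr_ge0 _) (ler_prod _ (E2 := fun i =>
    (if (0 < t i)%N then (c * (t i)%:R)^-1 else 1) *
    (expR (t i)%:R * (u i / (t i)%:R) ^+ t i) ^+ 2) _)) _.
  by move=> i _; rewrite sqr_ge0 sqr_pow_div_fact_le ?count_le_n.
rewrite big_split /= -big_mkcond prodrXl prod_expR_mul_powE.
set H := \prod_(i < q) _.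
have H_ge0 : 0 <= H.
  by rewrite prodr_ge0 // => i _; rewrite exprn_ge0 ?divr_ge0 ?mulr_ge0.
have -> : n`!%:R ^+ 2 * (weight * (expR n%:R / n%:R ^+ n * H) ^+ 2) =
    c * n%:R * weight * H ^+ 2.
  rewrite sqr_factE // expRM_natl (mulnC 2 n) exprD exprM expr1.
  by field; rewrite expf_neq0 ?pnatr_eq0 -?lt0n // gt_eqF ?expR_gt0.
apply: ler_wpM2l; first exact: mulr_ge0 (mulr_ge0 c_ge0 (ler0n _ _)) weight_ge0.
by rewrite ler_sqr ?nnegrE ?expR_ge0 // prod_pow_div_le_expR.
Qed.

Lemma multinom_eq0 i : (0 < t i)%N -> u i = 0 -> multinom n u t = 0.
Proof.
move=> t_gt0 u0; rewrite /multinom [X in _ * X](bigD1 i) //= u0 expr0n.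
by rewrite gtn_eqF // !mul0r mulr0.
Qed.

Lemma multinom_sqr_le_unbalanced j : 0 < u j -> 2 * (t j)%:R < n%:R * u j ->
  multinom n u t ^+ 2 <= expR 2 * n%:R * expR (- (n%:R * u j / 8)).
Proof.
move=> uj_gt0 tj_small.
have c_ge2 := stirling_ratio_ge2 _ n_gt0.
have c_ge0 : 0 <= c by lra.
have S_ge : n%:R * u j / 16 <= S.
  apply: le_trans (_ : (Num.sqrt (n%:R * u j) - Num.sqrt (t j)%:R) ^+ 2 <= S).
    have nuj_ge0 : 0 <= n%:R * u j := mulr_ge0 (ler0n _ _) (ltW uj_gt0).
    have := sqr_sqrtr nuj_ge0; have := sqr_sqrtr (ler0n R (t j)).
    have := sqrtr_ge0 (n%:R * u j); have := sqrtr_ge0 (t j)%:R.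
    set a := Num.sqrt _; set b := Num.sqrt _ => b_ge0 a_ge0 eb ea.
    have : b <= 3 / 4 * a by nra.
    nra.
  by rewrite (bigD1 j) //= lerDl sumr_ge0 // => i _; rewrite sqr_ge0.
have weight_le1 : weight <= 1.
  apply: prodr_ile1 => i t_gt0.
  have ct_ge1 : 1 <= c * (t i)%:R.
    have : 1 <= (t i)%:R :> R by rewrite ler1n.
    nra.
  by rewrite invr_ge0 invf_le1 ?ct_ge1 ?(lt_le_trans ltr01 ct_ge1) ?(le_trans ler01 ct_ge1).
apply: le_trans multinom_sqr_le _; apply: ler_pM.
- exact: mulr_ge0 (mulr_ge0 c_ge0 (ler0n _ _)) weight_ge0.
- exact: sqr_ge0.
- apply: le_trans (ler_wpM2l (mulr_ge0 c_ge0 (ler0n _ _)) weight_le1) _.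
  by rewrite mulr1 ler_wpM2r // stirling_ratio_le_expR2.
- by rewrite -expRM_natl ler_expR; lra.
Qed.

Lemma multinom_sqr_scaled_le_unbalanced j k : 0 < u j -> 2 * (t j)%:R < n%:R * u j ->
  multinom n u t ^+ 2 * n%:R ^+ k * P <=
    expR 2 * n%:R ^+ k.+1 * expR (- (n%:R * (P / 8))).
Proof.
move=> uj_gt0 tj_small.
have P_le : P <= u j by rewrite prod_supp_le // inE.
have P_le1 : P <= 1 := le_trans P_le (prob_le1 j).
have decay : expR (- (n%:R * u j / 8)) <= expR (- (n%:R * (P / 8))).
  by rewrite ler_expR lerN2 mulrA ler_pM2r ?invr_gt0 // ler_pM2l ?ltr0n.
have -> : expR 2 * n%:R ^+ k.+1 * expR (- (n%:R * (P / 8))) =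
    expR 2 * n%:R * expR (- (n%:R * (P / 8))) * n%:R ^+ k by rewrite exprS; ring.
rewrite mulrAC; apply: ler_wpM2r; first exact: exprn_ge0.
apply: le_trans (ler_wpM2l (sqr_ge0 _) P_le1) _; rewrite mulr1.
apply: le_trans (multinom_sqr_le_unbalanced j uj_gt0 tj_small) _.
by apply: ler_wpM2l; rewrite ?mulr_ge0 ?expR_ge0.
Qed.

Lemma multinom_sqr_le_balanced :
  (forall i, (0 < t i)%N -> 0 < u i) ->
  (forall i, 0 < u i -> n%:R * u i <= 2 * (t i)%:R) ->
  multinom n u t ^+ 2 <= c * n%:R * (2 / (c * n%:R)) ^+ #|supp u| / P.
Proof.
move=> t_supp u_t.
have c_gt0 := stirling_ratio_gt0 _ n_gt0.
have cn_gt0 : 0 < c * n%:R by rewrite mulr_gt0 ?ltr0n.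
have weightE : weight = \prod_(i in supp u) (c * (t i)%:R)^-1.
  apply: eq_bigl => i; rewrite inE; apply/idP/idP => [/t_supp // | u_gt0].
  rewrite -(ltr0n R) -(@pmulr_rgt0 _ 2) //.
  by apply: lt_le_trans (u_t _ u_gt0); rewrite mulr_gt0 ?ltr0n.
have weight_le : weight <= (2 / (c * n%:R)) ^+ #|supp u| / P.
  rewrite weightE -prodr_const -prodfV -big_split /=.
  apply: ler_prod => i; rewrite inE => u_gt0.
  have ct_ge : c * (n%:R * u i / 2) <= c * (t i)%:R.
    by rewrite ler_pM2l //; have := u_t _ u_gt0; lra.
  have cnu_gt0 : 0 < c * (n%:R * u i / 2).
    by rewrite pmulr_rgt0 // divr_gt0 // mulr_gt0 // ltr0n.
  rewrite invr_ge0 (le_trans (ltW cnu_gt0) ct_ge) /=.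
  have -> : 2 / (c * n%:R) / u i = (c * (n%:R * u i / 2))^-1.
    by field; rewrite !gt_eqF ?ltr0n.
  by rewrite lef_pV2 ?posrE // (lt_le_trans cnu_gt0 ct_ge).
have expR_le1 : expR (- S) ^+ 2 <= 1.
  rewrite -expRM_natl expR_le1 mulrN oppr_le0 mulr_ge0 // sumr_ge0 // => i _.
  exact: sqr_ge0.
apply: le_trans multinom_sqr_le _.
rewrite -[X in X <= _]mulrA -[X in _ <= X]mulrA ler_pM2l //.
by apply: le_trans (ler_wpM2l weight_ge0 expR_le1) _; rewrite mulr1.
Qed.

Lemma multinom_sqr_scaled_le_balanced :
  (0 < #|supp u|)%N ->
  (forall i, (0 < t i)%N -> 0 < u i) ->
  (forall i, 0 < u i -> n%:R * u i <= 2 * (t i)%:R) ->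
  multinom n u t ^+ 2 * n%:R ^+ #|supp u|.-1 * P <= 2.
Proof.
case k_eq : #|supp u| => [//|k] _ /= t_supp u_t.
have c_ge2 := stirling_ratio_ge2 _ n_gt0.
have scaleE (a b p : R) : 0 < a -> 0 < b -> 0 < p ->
    a * b * (2 / (a * b)) ^+ k.+1 / p * b ^+ k * p = 2 * (2 / a) ^+ k.
  move=> a_gt0 b_gt0 p_gt0; rewrite exprS !expr_div_n exprMn.
  by field; rewrite !gt_eqF ?exprn_gt0.
have M_le := multinom_sqr_le_balanced t_supp u_t; rewrite k_eq in M_le.
apply: le_trans (_ : 2 * (2 / c) ^+ k <= 2).
  rewrite -(scaleE c n%:R P) ?prod_supp_gt0 ?ltr0n //; last by lra.
  apply: ler_wpM2r; first exact: ltW prod_supp_gt0.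
  by apply: ler_wpM2r; first exact: exprn_ge0.
have : (2 / c) ^+ k <= 1.
  by apply: exprn_ile1; [apply: divr_ge0; lra | rewrite ler_pdivrMr ?mul1r //; lra].
lra.
Qed.

Lemma multinom_sqr_scaled_le :
  (0 < #|supp u|)%N ->
  expR 2 * n%:R ^+ #|supp u| * expR (- (n%:R * (P / 8))) <= 4 ->
  multinom n u t ^+ 2 * n%:R ^+ #|supp u|.-1 * P <= 4.
Proof.
move=> supp_gt0 large.
case: (pickP (fun i => (0 < t i)%N && (u i == 0))) => [i /andP[t_gt0 /eqP u0] | nz].
  by rewrite (multinom_eq0 i t_gt0 u0) expr0n /= !mul0r.
have t_supp i : (0 < t i)%N -> 0 < u i.
  by move=> t_gt0; have := nz i; rewrite t_gt0 lt_def u_ge0 andbT /= => ->.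
case: (pickP (fun j => (0 < u j) && (2 * (t j)%:R < n%:R * u j))).
  move=> j /andP[uj_gt0 tj_small]; apply: le_trans large.
  by have := multinom_sqr_scaled_le_unbalanced j #|supp u|.-1 uj_gt0 tj_small; rewrite prednK.
move=> balanced; apply: le_trans (_ : 2 <= 4); last by lra.
apply: multinom_sqr_scaled_le_balanced => // i ui_gt0.
by have := balanced i; rewrite ui_gt0 /= => /negbT; rewrite -leNgt.
Qed.

End FixedCounts.
End Distribution.

End MultinomialBound.

Theorem corollary2 (R : realType) (q k : nat) (u : 'I_q -> R) :
  (2 <= q)%N -> (1 <= k <= q)%N ->
  is_prob_dist u -> #|supp u| = k ->
  exists N : nat, forall n : nat, (N <= n)%N ->
    forall t : 'I_q -> nat, in_Nqn n t ->
      multinom n u t <=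
        2 / ((n%:R) `^ ((k%:R - 1) / 2) * Num.sqrt (\prod_(i in supp u) u i)).
Proof.
move=> _ /andP[k_gt0 _] [u_ge0 sum_u] supp_k.
have P_gt0 := @prod_supp_gt0 _ _ u.
have [|N large] := @eventually_pow_mul_expRN_le R _ _ k
  (divr_gt0 P_gt0 (ltr0n R 8)) (_ : 0 < 4 / expR 2).
  by rewrite divr_gt0 ?expR_gt0.
exists N.+1 => n n_gt t sum_t; have n_gt0 : (0 < n)%N by apply: leq_trans n_gt.
apply: le_two_div_of_sqr => //; first exact: multinom_ge0.
rewrite -supp_k; apply: multinom_sqr_scaled_le => //; first by rewrite supp_k.
rewrite supp_k -mulrA.
apply: le_trans (ler_wpM2l (expR_ge0 _) (large n (ltnW n_gt))) _.
by rewrite mulrCA divff ?mulr1 // gt_eqF ?expR_gt0.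
Qed.
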